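(* If $G$ is a finite group, then $S(G) = F(G)$.
   Context: $S(G) := \{ x \in G : x^{|G:H|} \in H \text{ for every subgroup } H \leqslant G \text{ of finite index}\}$. $F(G)$ is the Fitting subgroup of $G$, i.e. its largest nilpotent normal subgroup. *)

From mathcomp Require Import all_boot all_fingroup all_solvable.
Set Implicit Arguments. Unset Strict Implicit. Unset Printing Implicit Defensive.
Local Open Scope group_scope.

(* S(G) = { x in G : x ^ |G:H| \in H for every subgroup H of G (of finite
   index -- automatic for finite G) }. *)
Definition Sgroup (gT : finGroupType) (G : {set gT}) : {set gT} :=
  [set x in G | [forall H : {group gT}, (H \subset G) ==> (x ^+ #|G : H| \in H)]].

From mathcomp Require Import all_boot all_fingroup all_solvable.
Set Implicit Arguments. Unset Strict Implicit. Unset Printing Implicit Defensive.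
Local Open Scope group_scope.

(* F(G) lies in S(G): for H <= G, the index |F(G) : F(G) :&: H| divides
   |G : H| because F(G) is normal, and in a nilpotent group F every element
   satisfies x ^ |F : K| \in K for every subgroup K, since the normaliser of a
   proper subgroup grows (induct along K < N_F(K)).  Conversely, if x \in S(G)
   and P is a Sylow p-subgroup, then |G : P| is prime to p, so the p-part of x
   lies in P; thus it lies in every Sylow p-subgroup, i.e. in O_p(G) <= F(G),
   and x is the product of its p-parts. *)

Lemma expg_indexg_norm (gT : finGroupType) (K L : {group gT}) z :
  L \subset 'N(K) -> z \in L -> z ^+ #|L : K| \in K.
Proof.
move=> nKL Lz; have Nz : z \in 'N(K) := subsetP nKL z Lz.
apply: coset_idr; first by rewrite groupX.
by rewrite morphX // -card_quotient // expg_cardG ?mem_quotient.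
Qed.

Lemma nilpotent_expg_indexg (gT : finGroupType) (F K : {group gT}) x :
  nilpotent F -> K \subset F -> x \in F -> x ^+ #|F : K| \in K.
Proof.
move=> nilF; have [m] := ubnP (#|F| - #|K|).
elim: m K => // m IHm K /ltnSE-leFKm sKF Fx.
have [-> | neKF] := eqVneq K F; first by rewrite indexgg expg1.
have ltKN : K \proper 'N_F(K).
  by apply: nilpotent_proper_norm; rewrite // properEneq neKF.
have sNF : 'N_F(K) \subset F := subsetIl F _.
have sKN : K \subset 'N_F(K) := proper_sub ltKN.
have Nx : x ^+ #|F : 'N_F(K)| \in 'N_F(K).
  apply: IHm => //; apply: leq_trans leFKm.
  have ltKF : #|K| < #|F| := leq_trans (proper_card ltKN) (subset_leq_card sNF).
  exact: ltn_sub2l ltKF (proper_card ltKN).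
rewrite -(Lagrange_index sNF sKN) expgM.
exact: expg_indexg_norm (subsetIr _ _) Nx.
Qed.

Lemma indexg_setI_dvdn (gT : finGroupType) (G H N : {group gT}) :
  H \subset G -> N \subset G -> H \subset 'N(N) -> #|N : N :&: H| %| #|G : H|.
Proof.
move=> sHG sNG nNH.
rewrite indexgI -indexMg -(norm_joinEl nNH).
have sHNG : H <*> N \subset G by rewrite join_subG sHG.
by rewrite -(Lagrange_index sHNG (joing_subl _ _)) dvdn_mull.
Qed.

Lemma Fitting_sub_Sgroup (gT : finGroupType) (G : {group gT}) :
  'F(G) \subset Sgroup G.
Proof.
apply/subsetP=> x Fx; rewrite inE (subsetP (Fitting_sub G)) //=.
apply/forallP=> H; apply/implyP=> sHG.
have nFH : H \subset 'N('F(G)) := subset_trans sHG (normal_norm (Fitting_normal G)).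
have /dvdnP[k ->] := indexg_setI_dvdn sHG (Fitting_sub G) nFH.
rewrite mulnC expgM; apply: (subsetP (subsetIr 'F(G) H)); rewrite groupX //.
exact: nilpotent_expg_indexg (Fitting_nil G) (subsetIl _ _) Fx.
Qed.

Lemma coprime_expg_mem (gT : finGroupType) (H : {group gT}) x n :
  coprime #[x] n -> x ^+ n \in H -> x \in H.
Proof.
move=> co_x_n Hxn.
by rewrite -(expgK co_x_n (cycle_id x)) groupX.
Qed.

Lemma constt_Sgroup_pcore (gT : finGroupType) (G : {group gT}) (p : nat) x :
  x \in Sgroup G -> x.`_p \in 'O_p(G).
Proof.
rewrite inE => /andP[Gx /forallP SGx].
apply/bigcapP=> P maxP.
have /and3P[sPG pP p'iP] : p.-Sylow(G) P by rewrite -max_pgroup_Sylow.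
have Pxi : x ^+ #|G : P| \in P by have := SGx P; rewrite sPG.
apply: coprime_expg_mem (pnat_coprime (p_elt_constt p x) p'iP) _.
rewrite -consttX; apply: subsetP (cycle_constt p _).
by rewrite cycle_subG.
Qed.

Lemma Sgroup_sub_Fitting (gT : finGroupType) (G : {group gT}) :
  Sgroup G \subset 'F(G).
Proof.
apply/subsetP=> x SGx; rewrite -(prod_constt x); apply: group_prod => p _.
by rewrite (subsetP (pcore_sub p 'F(G))) // p_core_Fitting constt_Sgroup_pcore.
Qed.

Theorem proposition5p1 (gT : finGroupType) (G : {group gT}) :
  Sgroup G = 'F(G).
Proof.
by apply/eqP; rewrite eqEsubset Sgroup_sub_Fitting Fitting_sub_Sgroup.
Qed.
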